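(* Let $N\in\mathbb N$, $\beta\ge0$, and let $\boldsymbol c^{(1)},\boldsymbol c^{(2)}$ be $N\times N$ matrices with nonnegative entries. Then $$\big|p_N(\beta,\boldsymbol c^{(2)})-p_N(\beta,\boldsymbol c^{(1)})\big|\le\frac{\beta}{2N^2}\sum_{i,j=1}^N|c^{(2)}_{ij}-c^{(1)}_{ij}|.$$ In particular, for numbers $c_1,c_2\ge0$, $|p_N(\beta,c_2)-p_N(\beta,c_1)|\le\frac12\beta|c_2-c_1|$.
   Context: Fix an integer $q\ge2$, $[q]=\{1,\dots,q\}$. For $\sigma\in[q]^N$ and a real $N\times N$ matrix $J$, $H_N(\sigma,J)=\sum_{i,j=1}^N J_{ij}\delta(\sigma_i,\sigma_j)$ and $Z_N(J)=\sum_{\sigma\in[q]^N}e^{-H_N(\sigma,J)}$. For a matrix $\boldsymbol c=(c_{ij})$ with nonnegative entries, $\mathbb E_{N,\boldsymbol c}$ is expectation over a random matrix $J$ with independent entries $J_{ij}\sim$ Poisson with mean $c_{ij}/(2N)$, and $p_N(\beta,\boldsymbol c)=\mathbb E_{N,\boldsymbol c}[N^{-1}\ln Z_N(\beta J)]$. For a number $c\ge0$, $p_N(\beta,c)$ means $p_N(\beta,\boldsymbol c)$ with $c_{ij}=c$ for all $i,j$. *)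

From HB Require Import structures.
From mathcomp Require Import all_boot all_order all_algebra.
From mathcomp Require Import all_classical all_reals.
From mathcomp Require Import all_analysis.
Import numFieldNormedType.Exports.
Set Implicit Arguments. Unset Strict Implicit. Unset Printing Implicit Defensive.
Import Order.TTheory GRing.Theory Num.Theory.
Local Open Scope ring_scope.

(* Poisson pmf with mean lam >= 0 (including lam = 0: point mass at 0). *)
Definition poisson {R : realType} (lam : R) (k : nat) : R :=
  expR (- lam) * lam ^+ k / (k`!)%:R.

(* H_N(sigma, J) = sum_{i,j} J_ij delta(sigma_i, sigma_j); spins take values
   in 'I_q (a relabelling of [q] = {1,..,q}). *)
Definition Ham {R : realType} (q N : nat) (sigma : {ffun 'I_N -> 'I_q})
  (J : 'M[R]_N) : R :=
  \sum_(i < N) \sum_(j < N) J i j * (sigma i == sigma j)%:R.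

Definition Zpart {R : realType} (q N : nat) (J : 'M[R]_N) : R :=
  \sum_(sigma : {ffun 'I_N -> 'I_q}) expR (- Ham sigma J).

Definition natmx {R : realType} (N : nat) (J : 'I_N * 'I_N -> nat) : 'M[R]_N :=
  \matrix_(i, j) (J (i, j))%:R.

Definition truncE {R : realType} (N : nat) (c : 'M[R]_N)
  (f : 'M[R]_N -> R) (K : nat) : R :=
  \sum_(J : {ffun 'I_N * 'I_N -> 'I_K})
     (\prod_(ij : 'I_N * 'I_N) poisson (c ij.1 ij.2 / (2 * N)%:R) (J ij))
     * f (natmx (fun ij => nat_of_ord (J ij))).

(* E_{N,c}[f(J)] for independent J_ij ~ Poisson(c_ij/(2N)): the (absolutely
   convergent, for the f used here) series over nat^(N x N), as the limit of
   its truncations. *)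
Definition EPois {R : realType} (N : nat) (c : 'M[R]_N) (f : 'M[R]_N -> R) : R :=
  limn (truncE c f).

Definition pN {R : realType} (q N : nat) (beta : R) (c : 'M[R]_N) : R :=
  EPois c (fun J => N%:R^-1 * ln (Zpart q (beta *: J))).

From HB Require Import structures.
From mathcomp Require Import all_boot all_order all_algebra.
From mathcomp Require Import all_classical all_reals.
From mathcomp Require Import all_analysis.
From mathcomp Require Import ring lra.
Import numFieldNormedType.Exports.
Set Implicit Arguments. Unset Strict Implicit. Unset Printing Implicit Defensive.
Import Order.TTheory GRing.Theory Num.Theory.
Local Open Scope ring_scope.

(* Since Poisson(lam + mu) is the law of A + B for independent A ~ Poisson(lam)
   and B ~ Poisson(mu), raising the means of J by mu amounts to adding an
   independent Poisson(mu) increment to J.  The integrand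
   f(g) = N^-1 ln Z_N(beta g) is nonincreasing in g and drops by at most beta/N
   per unit added to an entry, so E_lam f moves by at most (beta/N) sum mu when
   lam moves to lam + mu.  Passing from c1 to c2 through the entrywise minimum
   of the means c_ij/(2N) yields the bound.  The expectation is a limit of sums
   over boxes [g < K]; we control these through the nonnegative deficit
   f(0) - f(g), whose truncated expectations increase with K. *)

Section Poisson.
Variable R : realType.
Implicit Types lam mu : R.

Lemma poisson_ge0 lam k : 0 <= lam -> 0 <= poisson lam k.
Proof.
by move=> lam_ge0; rewrite /poisson divr_ge0 ?mulr_ge0 ?expR_ge0 ?exprn_ge0.
Qed.

Lemma sum_poissonE lam K :
  \sum_(k < K) poisson lam k = expR (- lam) * series (exp_coeff lam) K.
Proof.
rewrite /series /= big_mkord mulr_sumr; apply: eq_bigr => k _.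
by rewrite /poisson /exp_coeff /= mulrA.
Qed.

Lemma expRN_mulK lam : expR (- lam) * expR lam = 1.
Proof. by rewrite -expRD addNr expR0. Qed.

Lemma sum_poisson_ge0 lam K : 0 <= lam -> 0 <= \sum_(k < K) poisson lam k.
Proof. by move=> lam_ge0; apply: sumr_ge0 => k _; exact: poisson_ge0. Qed.

Lemma sum_poisson_le1 lam K : 0 <= lam -> \sum_(k < K) poisson lam k <= 1.
Proof.
move=> lam_ge0; have series_le : series (exp_coeff lam) K <= expR lam.
  apply: nondecreasing_cvgn_le (is_cvg_series_exp_coeff lam) _.
  apply/nondecreasing_seqP => n; rewrite /series /= big_nat_recr //= lerDl.
  exact: exp_coeff_ge0.
by rewrite sum_poissonE -(expRN_mulK lam) ler_wpM2l ?expR_ge0.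
Qed.

Lemma cvg_sum_poisson lam :
  ((fun K => \sum_(k < K) poisson lam k) @ \oo --> (1 : R))%classic.
Proof.
under eq_fun do rewrite sum_poissonE.
rewrite -(expRN_mulK lam); apply: cvgMl_tmp; exact: is_cvg_series_exp_coeff.
Qed.

Lemma sum_poisson_mean_le lam K :
  0 <= lam -> \sum_(k < K) k%:R * poisson lam k <= lam.
Proof.
move=> lam_ge0; case: K => [|K]; first by rewrite big_ord0.
rewrite big_ord_recl mul0r add0r.
have shift (k : 'I_K) : (bump 0 k)%:R * poisson lam (bump 0 k) = lam * poisson lam k.
  rewrite /bump /= /poisson factS natrM exprS.
  have fact_neq0 : (k`!)%:R != 0 :> R by rewrite pnatr_eq0 -lt0n fact_gt0.
  have k1_neq0 : (k.+1)%:R != 0 :> R by rewrite pnatr_eq0.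
  (* Generalizing the casts keeps [field] from normalizing [k.+1%:R]. *)
  move: fact_neq0 k1_neq0; move: (k`!)%:R (k.+1)%:R (lam ^+ k) (expR (- lam)).
  by move=> f k1 x e f0 k10; field; rewrite f0 k10.
rewrite (eq_bigr _ (fun k _ => shift k)) -mulr_sumr.
by rewrite -[X in _ <= X]mulr1 ler_wpM2l // sum_poisson_le1.
Qed.

Lemma poissonD lam mu n :
  poisson (lam + mu) n = \sum_(a < n.+1) poisson lam a * poisson mu (n - a).
Proof.
rewrite /poisson opprD expRD addrC exprDn mulr_sumr mulr_suml.
apply: eq_bigr => a _.
have a_le_n : (a <= n)%N by rewrite -ltnS.
have factE : (n`!)%:R = ('C(n, a))%:R * ((a`!)%:R * ((n - a)`!)%:R) :> R.
  by rewrite -!natrM (bin_fact a_le_n).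
have fa_neq0 : (a`!)%:R != 0 :> R by rewrite pnatr_eq0 -lt0n fact_gt0.
have fna_neq0 : ((n - a)`!)%:R != 0 :> R by rewrite pnatr_eq0 -lt0n fact_gt0.
have bin_neq0 : ('C(n, a))%:R != 0 :> R by rewrite pnatr_eq0 -lt0n bin_gt0.
rewrite factE -mulr_natr.
move: fa_neq0 fna_neq0 bin_neq0.
move: (a`!)%:R ((n - a)`!)%:R ('C(n, a))%:R (lam ^+ a) (mu ^+ (n - a)).
move: (expR (- lam)) (expR (- mu)) => el em fa fna b x y fa0 fna0 b0.
by field; rewrite b0 fa0 fna0.
Qed.

Lemma poissonD_ord lam mu n K : (n < K)%N ->
  poisson (lam + mu) n =
  \sum_(a < K) \sum_(b < K) poisson lam a * poisson mu b * ((a + b == n)%N)%:R.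
Proof.
move=> n_lt_K.
rewrite poissonD (big_ord_widen K (fun a => poisson lam a * poisson mu (n - a)) n_lt_K).
rewrite big_mkcond; apply: eq_bigr => a _.
case: (ltnP a n.+1) => [a_le_n | n_lt_a]; last first.
  by rewrite big1 // => b _; rewrite gtn_eqF ?mulr0 // ltn_addr.
have nma_lt_K : (n - a < K)%N by apply: leq_ltn_trans (leq_subr a n) n_lt_K.
rewrite (bigD1 (Ordinal nma_lt_K)) //= subnKC // eqxx mulr1 big1 ?addr0 //.
move=> b b_neq; rewrite (_ : (a + b == n)%N = false) ?mulr0 //.
apply/negbTE; apply: contra b_neq => /eqP ab_eq_n; apply/eqP/val_inj => /=.
by rewrite -ab_eq_n addKn.
Qed.

End Poisson.

Section TruncatedExpectation.
Variables (R : realType) (I : finType).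
Implicit Types (lam mu : I -> R) (G : (I -> nat) -> R).

Definition poisson_wt lam (g : I -> nat) : R := \prod_i poisson (lam i) (g i).

Definition trunc_expect lam G K : R :=
  \sum_(J : {ffun I -> 'I_K}) poisson_wt lam (fun i => J i) * G (fun i => J i).

Lemma poisson_wt_ge0 lam g : (forall i, 0 <= lam i) -> 0 <= poisson_wt lam g.
Proof. by move=> lam_ge0; apply: prodr_ge0 => i _; exact: poisson_ge0. Qed.

Lemma trunc_expect_ge0 lam G K :
  (forall i, 0 <= lam i) -> (forall g, 0 <= G g) -> 0 <= trunc_expect lam G K.
Proof.
by move=> lam_ge0 G_ge0; apply: sumr_ge0 => J _; rewrite mulr_ge0 ?poisson_wt_ge0.
Qed.

Lemma ler_trunc_expect lam G1 G2 K : (forall i, 0 <= lam i) ->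
  (forall g, G1 g <= G2 g) -> trunc_expect lam G1 K <= trunc_expect lam G2 K.
Proof.
by move=> lam_ge0 G12; apply: ler_sum => J _; rewrite ler_wpM2l ?poisson_wt_ge0.
Qed.

Lemma sum_ffun_ord_widen (Phi : (I -> nat) -> R) K M : (K <= M)%N ->
  \sum_(J : {ffun I -> 'I_K}) Phi (fun i => J i) =
  \sum_(J : {ffun I -> 'I_M}) [forall i, (J i < K)%N]%:R * Phi (fun i => J i).
Proof.
move=> K_le_M; pose widen (J : {ffun I -> 'I_K}) := [ffun i => widen_ord K_le_M (J i)].
have widen_inj : injective widen.
  move=> J1 J2 /ffunP eq12; apply/ffunP => i; apply: val_inj.
  by have := eq12 i; rewrite !ffunE => /(congr1 val).
have widen_image : [set widen J | J in [set: {ffun I -> 'I_K}]] =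
                   [set J : {ffun I -> 'I_M} | [forall i, (J i < K)%N]].
  apply/setP => J; rewrite inE; apply/imsetP/forallP => [[J' _ ->] i | J_lt_K].
    by rewrite /widen ffunE /=.
  exists [ffun i => Ordinal (J_lt_K i)]; first by rewrite inE.
  by apply/ffunP => i; rewrite /widen !ffunE; apply: val_inj.
rewrite (eq_bigr (fun J => if J \in widen @: [set: {ffun I -> 'I_K}]
                           then Phi (fun i => J i) else 0)); last first.
  by move=> J _; rewrite widen_image inE; case: ifP; rewrite ?mul1r ?mul0r.
rewrite -big_mkcond big_imset /=; last by move=> ? ? _ _; exact: widen_inj.
apply: eq_big => [J | J _]; rewrite ?inE //.
by congr Phi; apply/funext => i; rewrite /widen ffunE.
Qed.

Lemma trunc_expect_homo lam G : (forall i, 0 <= lam i) -> (forall g, 0 <= G g) ->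
  {homo trunc_expect lam G : K M / (K <= M)%N >-> K <= M}.
Proof.
move=> lam_ge0 G_ge0 K M K_le_M.
rewrite /trunc_expect (sum_ffun_ord_widen (fun g => poisson_wt lam g * G g) K_le_M).
apply: ler_sum => J _; case: [forall i, _]; rewrite ?mul1r ?mul0r //.
by rewrite mulr_ge0 ?poisson_wt_ge0.
Qed.

Lemma trunc_expect1E lam K :
  trunc_expect lam (fun _ => 1) K = \prod_i \sum_(k < K) poisson (lam i) k.
Proof. by rewrite bigA_distr_bigA; apply: eq_bigr => J _; rewrite mulr1. Qed.

Lemma trunc_expect1_le1 lam K : (forall i, 0 <= lam i) ->
  trunc_expect lam (fun _ => 1) K <= 1.
Proof.
move=> lam_ge0; rewrite trunc_expect1E; apply: prodr_ile1 => i _.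
by rewrite sum_poisson_ge0 ?sum_poisson_le1.
Qed.

Lemma cvg_trunc_expect1 lam :
  (trunc_expect lam (fun _ => 1) @ \oo --> (1 : R))%classic.
Proof.
have -> : trunc_expect lam (fun _ => 1) =
          (fun K => \prod_i \sum_(k < K) poisson (lam i) k).
  by apply/funext => K; rewrite trunc_expect1E.
have := cvg_big (U := R) (op := *%R) (x0 := 1) (P := xpredT) mul_continuous
  (r := index_enum I) (Fa := fun=> 1) _ (fun i _ => cvg_sum_poisson (lam i)).
by rewrite big1_eq => cvg_prod; exact: cvg_prod.
Qed.

Lemma trunc_expect_coord_le mu K i0 : (forall i, 0 <= mu i) ->
  trunc_expect mu (fun g => (g i0)%:R) K <= mu i0.
Proof.
move=> mu_ge0; pose w i (k : nat) : R := if i == i0 then k%:R else 1.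
have -> : trunc_expect mu (fun g => (g i0)%:R) K =
          \prod_i \sum_(k < K) poisson (mu i) k * w i k.
  rewrite bigA_distr_bigA; apply: eq_bigr => J _.
  by rewrite big_split /= -big_mkcond big_pred1_eq.
rewrite (bigD1 i0) //= -[X in _ <= X]mulr1.
apply: ler_pM.
- by apply: sumr_ge0 => k _; rewrite /w eqxx mulr_ge0 ?poisson_ge0.
- apply: prodr_ge0 => i /negbTE i_neq; apply: sumr_ge0 => k _.
  by rewrite /w i_neq mulr1 poisson_ge0.
- by rewrite /w eqxx; under eq_bigr do rewrite mulrC; exact: sum_poisson_mean_le.
- apply: prodr_ile1 => i /negbTE i_neq; under eq_bigr do rewrite /w i_neq mulr1.
  by rewrite sum_poisson_ge0 ?sum_poisson_le1.
Qed.

Lemma trunc_expect_sum_le mu K (L : R) : (forall i, 0 <= mu i) -> 0 <= L ->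
  trunc_expect mu (fun g => L * \sum_i (g i)%:R) K <= L * \sum_i mu i.
Proof.
move=> mu_ge0 L_ge0.
have -> : trunc_expect mu (fun g => L * \sum_i (g i)%:R) K =
          L * \sum_i trunc_expect mu (fun g => (g i)%:R) K.
  rewrite /trunc_expect exchange_big mulr_sumr; apply: eq_bigr => J _.
  by rewrite -!mulr_sumr mulrCA.
by rewrite ler_wpM2l // ler_sum // => i _; exact: trunc_expect_coord_le.
Qed.

Lemma prod_natr_bool (P : pred I) : \prod_i (P i)%:R = [forall i, P i]%:R :> R.
Proof.
case: (boolP [forall i, P i]) => [/forallP P_all | /forallPn [i not_Pi]].
  by apply: big1 => i _; rewrite P_all.
by rewrite (bigD1 i) //= (negbTE not_Pi) mul0r.
Qed.

Lemma trunc_expectD lam mu G K :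
  trunc_expect (fun i => lam i + mu i) G K =
  \sum_(A : {ffun I -> 'I_K}) \sum_(B : {ffun I -> 'I_K})
    [forall i, (A i + B i < K)%N]%:R *
    (poisson_wt lam (fun i => A i) * poisson_wt mu (fun i => B i) *
     G (fun i => (A i + B i)%N)).
Proof.
have wtD (J : {ffun I -> 'I_K}) : poisson_wt (fun i => lam i + mu i) (fun i => J i) =
    \sum_(A : {ffun I -> 'I_K}) \sum_(B : {ffun I -> 'I_K}) \prod_i
      (poisson (lam i) (A i) * poisson (mu i) (B i) * ((A i + B i == J i)%N)%:R).
  rewrite /poisson_wt.
  under eq_bigr => i _ do rewrite (poissonD_ord (lam i) (mu i) (ltn_ord (J i))).
  by rewrite bigA_distr_bigA; apply: eq_bigr => A _; rewrite bigA_distr_bigA.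
rewrite /trunc_expect; under eq_bigr => J _ do rewrite wtD mulr_suml.
rewrite exchange_big; apply: eq_bigr => A _.
under eq_bigr => J _ do rewrite mulr_suml.
rewrite exchange_big; apply: eq_bigr => B _.
under eq_bigr => J _ do rewrite big_split /= big_split /= prod_natr_bool.
have [AB_lt_K | AB_ge_K] := boolP [forall i, (A i + B i < K)%N]; last first.
  rewrite mul0r; apply: big1 => J _; case: forallP => [AB_eq | _]; last first.
    by rewrite !mulr0 mul0r.
  by case/negP: AB_ge_K; apply/forallP => i; rewrite (eqP (AB_eq i)) ltn_ord.
pose J0 : {ffun I -> 'I_K} := [ffun i => Ordinal (forallP AB_lt_K i)].
rewrite (bigD1 J0) //= [X in _ + X]big1 ?addr0 => [|J J_neq].
  have -> : [forall i, (A i + B i == J0 i)%N] by apply/forallP => i; rewrite ffunE.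
  rewrite mul1r mulr1; congr (_ * G _).
  by apply/funext => i; rewrite ffunE.
case: forallP => [AB_eq | _]; last by rewrite mulr0 mul0r.
case/eqP: J_neq; apply/ffunP => i; apply: val_inj; rewrite ffunE /=.
exact/esym/eqP/AB_eq.
Qed.

End TruncatedExpectation.

Section PoissonLipschitz.
Variables (R : realType) (I : finType) (G : (I -> nat) -> R) (L : R).
Hypothesis L_ge0 : 0 <= L.
Hypothesis G_antitone : forall A B : I -> nat, G (fun i => (A i + B i)%N) <= G A.
Hypothesis G_lipschitz : forall A B : I -> nat,
  G A <= G (fun i => (A i + B i)%N) + L * \sum_i (B i)%:R.
Implicit Types lam mu : I -> R.

Let deficit g := G (fun=> 0%N) - G g.

Let add0_fun (g : I -> nat) : (fun i => (0 + g i)%N) = g.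
Proof. by apply/funext => i; rewrite add0n. Qed.

Let deficit_monotone A B : deficit A <= deficit (fun i => (A i + B i)%N).
Proof. by rewrite lerD2l lerN2. Qed.

Let deficit_lipschitz A B :
  deficit (fun i => (A i + B i)%N) <= deficit A + L * \sum_i (B i)%:R.
Proof. by rewrite /deficit -addrA lerD2l; have := G_lipschitz A B; lra. Qed.

Let deficit_ge0 g : 0 <= deficit g.
Proof. by have := deficit_monotone (fun=> 0%N) g; rewrite add0_fun /deficit subrr. Qed.

Let deficit_le g : deficit g <= L * \sum_i (g i)%:R.
Proof.
by have := deficit_lipschitz (fun=> 0%N) g; rewrite add0_fun /deficit subrr add0r.
Qed.

Lemma trunc_expect_deficitD_le lam mu K :
  (forall i, 0 <= lam i) -> (forall i, 0 <= mu i) ->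
  trunc_expect (fun i => lam i + mu i) deficit K <=
  trunc_expect lam deficit K + L * \sum_i mu i.
Proof.
move=> lam_ge0 mu_ge0; rewrite trunc_expectD.
set wl := fun A : {ffun I -> 'I_K} => poisson_wt lam (fun i => A i).
set wm := fun B : {ffun I -> 'I_K} => poisson_wt mu (fun i => B i).
have termwise (A B : {ffun I -> 'I_K}) : [forall i, (A i + B i < K)%N]%:R *
    (wl A * wm B * deficit (fun i => (A i + B i)%N)) <=
    wl A * deficit (fun i => A i) * (wm B * 1) +
    wl A * 1 * (wm B * (L * \sum_i (B i : nat)%:R)).
  have wlm_ge0 : 0 <= wl A * wm B by rewrite mulr_ge0 ?poisson_wt_ge0.
  apply: (@le_trans _ _ (wl A * wm B * deficit (fun i => (A i + B i)%N))).
    by case: [forall i, _]; rewrite ?mul1r ?mul0r // mulr_ge0 ?deficit_ge0.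
  have -> : wl A * deficit (fun i => A i) * (wm B * 1) +
            wl A * 1 * (wm B * (L * \sum_i (B i : nat)%:R)) =
            wl A * wm B * (deficit (fun i => A i) + L * \sum_i (B i : nat)%:R) by ring.
  by rewrite ler_wpM2l // deficit_lipschitz.
apply: le_trans (ler_sum _ (fun A _ => ler_sum _ (fun B _ => termwise A B))) _.
have -> : \sum_A \sum_B (wl A * deficit (fun i => A i) * (wm B * 1) +
                         wl A * 1 * (wm B * (L * \sum_i (B i : nat)%:R))) =
          trunc_expect lam deficit K * trunc_expect mu (fun _ => 1) K +
          trunc_expect lam (fun _ => 1) K *
          trunc_expect mu (fun g => L * \sum_i (g i)%:R) K.
  by rewrite /trunc_expect !big_distrlr -big_split; apply: eq_bigr => A _;
    rewrite -big_split.
apply: lerD.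
  by apply: ler_piMr; [exact: trunc_expect_ge0 | exact: trunc_expect1_le1].
rewrite -[X in _ <= X]mul1r; apply: ler_pM.
- by rewrite trunc_expect_ge0.
- by rewrite trunc_expect_ge0 // => g; rewrite mulr_ge0 ?sumr_ge0.
- exact: trunc_expect1_le1.
- exact: trunc_expect_sum_le.
Qed.

Lemma trunc_expect_deficitD_ge lam mu K :
  (forall i, 0 <= lam i) -> (forall i, 0 <= mu i) ->
  trunc_expect lam deficit K * trunc_expect mu (fun _ => 1) K <=
  trunc_expect (fun i => lam i + mu i) deficit (K + K).
Proof.
move=> lam_ge0 mu_ge0; rewrite trunc_expectD /trunc_expect.
rewrite (sum_ffun_ord_widen (fun g => poisson_wt lam g * deficit g) (leq_addr K K)).
rewrite (sum_ffun_ord_widen (fun g => poisson_wt mu g * 1) (leq_addr K K)).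
rewrite big_distrlr; apply: ler_sum => A _; apply: ler_sum => B _ /=.
have wl_ge0 := poisson_wt_ge0 (fun i => A i) lam_ge0.
have wm_ge0 := poisson_wt_ge0 (fun i => B i) mu_ge0.
have rhs_ge0 : 0 <= [forall i, (A i + B i < K + K)%N]%:R *
    (poisson_wt lam (fun i => A i) * poisson_wt mu (fun i => B i) *
     deficit (fun i => (A i + B i)%N)).
  by rewrite !mulr_ge0 ?deficit_ge0.
have [A_lt_K | _] := boolP [forall i, (A i < K)%N]; last by rewrite !mul0r.
have [B_lt_K | _] := boolP [forall i, (B i < K)%N]; last by rewrite mul0r mulr0.
have -> : [forall i, (A i + B i < K + K)%N].
  apply/forallP => i; rewrite -addnS; apply: leq_add; last exact: (forallP B_lt_K).
  exact: ltnW (forallP A_lt_K i).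
by rewrite !mul1r mulr1 mulrAC ler_wpM2l ?mulr_ge0 ?deficit_monotone.
Qed.

Lemma cvgn_trunc_expect_deficit lam : (forall i, 0 <= lam i) ->
  cvgn (trunc_expect lam deficit).
Proof.
move=> lam_ge0; apply: nondecreasing_is_cvgn; first exact: trunc_expect_homo.
exists (L * \sum_i lam i) => _ [K _ <-].
apply: le_trans (trunc_expect_sum_le K lam_ge0 L_ge0).
by apply: ler_trunc_expect => // g; exact: deficit_le.
Qed.

Let mean_deficit lam := limn (trunc_expect lam deficit).

Let trunc_expect_le_mean lam K : (forall i, 0 <= lam i) ->
  trunc_expect lam deficit K <= mean_deficit lam.
Proof.
move=> lam_ge0; apply: nondecreasing_cvgn_le; first exact: trunc_expect_homo.
exact: cvgn_trunc_expect_deficit.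
Qed.

Lemma mean_deficitD_le lam mu : (forall i, 0 <= lam i) -> (forall i, 0 <= mu i) ->
  mean_deficit (fun i => lam i + mu i) <= mean_deficit lam + L * \sum_i mu i.
Proof.
move=> lam_ge0 mu_ge0; have lam_mu_ge0 i : 0 <= lam i + mu i by rewrite addr_ge0.
apply: limr_le; first exact: cvgn_trunc_expect_deficit.
apply: nearW => K; apply: le_trans (trunc_expect_deficitD_le K lam_ge0 mu_ge0) _.
by rewrite lerD2r trunc_expect_le_mean.
Qed.

Lemma le_mean_deficitD lam mu : (forall i, 0 <= lam i) -> (forall i, 0 <= mu i) ->
  mean_deficit lam <= mean_deficit (fun i => lam i + mu i).
Proof.
move=> lam_ge0 mu_ge0; have lam_mu_ge0 i : 0 <= lam i + mu i by rewrite addr_ge0.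
have prod_cvg : ((fun K => trunc_expect lam deficit K * trunc_expect mu (fun _ => 1) K)
                 @ \oo --> mean_deficit lam * 1)%classic.
  by apply: cvgM; [exact: cvgn_trunc_expect_deficit | exact: cvg_trunc_expect1].
rewrite -[mean_deficit lam]mulr1 -(cvg_lim _ prod_cvg) //.
apply: limr_le; first exact: cvgP prod_cvg.
apply: nearW => K; apply: le_trans (trunc_expect_deficitD_ge K lam_ge0 mu_ge0) _.
exact: trunc_expect_le_mean.
Qed.

Lemma mean_deficit_lipschitz lam1 lam2 :
  (forall i, 0 <= lam1 i) -> (forall i, 0 <= lam2 i) ->
  `|mean_deficit lam2 - mean_deficit lam1| <= L * \sum_i `|lam2 i - lam1 i|.
Proof.
move=> lam1_ge0 lam2_ge0; pose nu i := Num.min (lam1 i) (lam2 i).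
have nu_ge0 i : 0 <= nu i by rewrite le_min lam1_ge0 lam2_ge0.
pose D := L * \sum_i `|lam2 i - lam1 i|.
have sandwich lam : (forall i, nu i <= lam i) ->
    (forall i, lam i - nu i <= `|lam2 i - lam1 i|) ->
    mean_deficit nu <= mean_deficit lam <= mean_deficit nu + D.
  move=> nu_le gap_le; have gap_ge0 i : 0 <= lam i - nu i by rewrite subr_ge0.
  have -> : lam = (fun i => nu i + (lam i - nu i)).
    by apply/funext => i; rewrite addrC subrK.
  rewrite le_mean_deficitD //=; apply: le_trans (mean_deficitD_le nu_ge0 gap_ge0) _.
  by rewrite lerD2l ler_wpM2l // ler_sum.
have /andP[lo1 hi1] : mean_deficit nu <= mean_deficit lam1 <= mean_deficit nu + D.
  apply: sandwich => i; rewrite /nu ?ge_min ?lexx //.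
  by rewrite minEle; case: ifP => _; rewrite ?subrr // distrC ler_norm.
have /andP[lo2 hi2] : mean_deficit nu <= mean_deficit lam2 <= mean_deficit nu + D.
  apply: sandwich => i; rewrite /nu ?ge_min ?lexx ?orbT //.
  by rewrite minEle; case: ifP => _; rewrite ?subrr // ler_norm.
by rewrite ler_norml -/D; apply/andP; split; lra.
Qed.

Lemma limn_trunc_expect_lipschitz lam1 lam2 :
  (forall i, 0 <= lam1 i) -> (forall i, 0 <= lam2 i) ->
  `|limn (trunc_expect lam2 G) - limn (trunc_expect lam1 G)| <=
  L * \sum_i `|lam2 i - lam1 i|.
Proof.
have limnE lam : (forall i, 0 <= lam i) ->
    limn (trunc_expect lam G) = G (fun=> 0%N) - mean_deficit lam.
  move=> lam_ge0; apply: cvg_lim => //.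
  have -> : trunc_expect lam G = fun K =>
      G (fun=> 0%N) * trunc_expect lam (fun=> 1) K - trunc_expect lam deficit K.
    apply/funext => K; rewrite /trunc_expect mulr_sumr -sumrB.
    by apply: eq_bigr => J _; rewrite /deficit; ring.
  have diff_cvg := cvgB (cvgM (cvg_cst (G (fun=> 0%N))) (cvg_trunc_expect1 lam))
                        (cvgn_trunc_expect_deficit lam_ge0).
  by rewrite mulr1 in diff_cvg; exact: diff_cvg.
move=> lam1_ge0 lam2_ge0; rewrite !limnE // opprB addrC addrA subrK distrC.
exact: mean_deficit_lipschitz.
Qed.

End PoissonLipschitz.

Section PottsPressure.
Variables (R : realType) (q N : nat) (beta : R).
Hypothesis q_gt0 : (0 < q)%N.
Hypothesis beta_ge0 : 0 <= beta.
Implicit Types X Y : 'M[R]_N.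

Lemma Zpart_gt0 (J : 'M[R]_N) : 0 < Zpart q J.
Proof.
rewrite /Zpart (bigD1 [ffun=> Ordinal q_gt0]) //= ltr_pwDl ?expR_gt0 //.
by apply: sumr_ge0 => sigma _; exact: expR_ge0.
Qed.

Lemma ler_Ham X Y (sigma : {ffun 'I_N -> 'I_q}) : (forall i j, X i j <= Y i j) ->
  Ham sigma (beta *: X) <= Ham sigma (beta *: Y).
Proof.
move=> X_le_Y; apply: ler_sum => i _; apply: ler_sum => j _; rewrite !mxE.
by rewrite ler_wpM2r ?ler0n // ler_wpM2l.
Qed.

Lemma Ham_le_add X Y (sigma : {ffun 'I_N -> 'I_q}) : (forall i j, X i j <= Y i j) ->
  Ham sigma (beta *: Y) <=
  Ham sigma (beta *: X) + beta * \sum_i \sum_j (Y i j - X i j).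
Proof.
move=> X_le_Y; rewrite mulr_sumr -big_split; apply: ler_sum => i _.
rewrite mulr_sumr -big_split; apply: ler_sum => j _; rewrite !mxE.
have gap_ge0 : 0 <= beta * (Y i j - X i j) by rewrite mulr_ge0 // subr_ge0.
by case: (sigma i == sigma j); rewrite /= ?mulr1 ?mulr0 ?add0r // -mulrDr addrC subrK.
Qed.

Lemma ln_Zpart_antitone X Y : (forall i j, X i j <= Y i j) ->
  ln (Zpart q (beta *: Y)) <= ln (Zpart q (beta *: X)).
Proof.
move=> X_le_Y; rewrite ler_ln ?posrE ?Zpart_gt0 //.
by apply: ler_sum => sigma _; rewrite ler_expR lerN2 ler_Ham.
Qed.

Lemma ln_Zpart_le_add X Y : (forall i j, X i j <= Y i j) ->
  ln (Zpart q (beta *: X)) <=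
  ln (Zpart q (beta *: Y)) + beta * \sum_i \sum_j (Y i j - X i j).
Proof.
move=> X_le_Y; set D := beta * _.
have Z_le : Zpart q (beta *: X) <= expR D * Zpart q (beta *: Y).
  rewrite /Zpart mulr_sumr; apply: ler_sum => sigma _; rewrite -expRD ler_expR.
  by have := Ham_le_add sigma X_le_Y; rewrite -/D; lra.
rewrite addrC -(expRK D) -lnM ?posrE ?expR_gt0 ?Zpart_gt0 //.
by rewrite ler_ln ?posrE ?mulr_gt0 ?expR_gt0 ?Zpart_gt0.
Qed.

Definition pressure (g : 'I_N * 'I_N -> nat) : R :=
  N%:R^-1 * ln (Zpart q (beta *: natmx g)).

Lemma natmx_le_add (A B : 'I_N * 'I_N -> nat) i j :
  natmx A i j <= natmx (fun p => (A p + B p)%N) i j :> R.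
Proof. by rewrite !mxE ler_nat leq_addr. Qed.

Lemma pressure_antitone A B : pressure (fun p => (A p + B p)%N) <= pressure A.
Proof.
rewrite ler_wpM2l ?invr_ge0 ?ler0n // ln_Zpart_antitone // => i j.
exact: natmx_le_add.
Qed.

Lemma pressure_lipschitz A B :
  pressure A <= pressure (fun p => (A p + B p)%N) + N%:R^-1 * beta * \sum_p (B p)%:R.
Proof.
have gapE : \sum_i \sum_j (natmx (fun p => (A p + B p)%N) i j - natmx A i j) =
            \sum_p (B p)%:R :> R.
  rewrite pair_bigA; apply: eq_bigr => -[i j] _.
  by rewrite !mxE natrD addrAC subrr add0r.
rewrite /pressure -mulrA -mulrDr ler_wpM2l ?invr_ge0 ?ler0n // -gapE.
by apply: ln_Zpart_le_add => i j; exact: natmx_le_add.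
Qed.

Lemma pNE (c : 'M[R]_N) :
  pN q beta c = limn (trunc_expect (fun p => c p.1 p.2 / (2 * N)%:R) pressure).
Proof. by []. Qed.

End PottsPressure.

Lemma pN_lipschitz (R : realType) (q N : nat) (beta : R) (c1 c2 : 'M[R]_N) :
  (0 < q)%N -> 0 <= beta -> (forall i j, 0 <= c1 i j) -> (forall i j, 0 <= c2 i j) ->
  `|pN q beta c2 - pN q beta c1| <=
  beta / (2 * (N ^ 2)%:R) * \sum_(i < N) \sum_(j < N) `|c2 i j - c1 i j|.
Proof.
move=> q_gt0 beta_ge0 c1_ge0 c2_ge0.
set mean := fun (c : 'M[R]_N) (p : 'I_N * 'I_N) => c p.1 p.2 / (2 * N)%:R.
have mean_ge0 (c : 'M[R]_N) : (forall i j, 0 <= c i j) -> forall p, 0 <= mean c p.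
  by move=> c_ge0 p; rewrite divr_ge0.
have L_ge0 : 0 <= N%:R^-1 * beta by rewrite mulr_ge0 ?invr_ge0.
rewrite !pNE; apply: le_trans (limn_trunc_expect_lipschitz L_ge0
  (pressure_antitone q_gt0 beta_ge0) (pressure_lipschitz q_gt0 beta_ge0)
  (mean_ge0 _ c1_ge0) (mean_ge0 _ c2_ge0)) _.
have -> : \sum_p `|mean c2 p - mean c1 p| =
          (2 * N)%:R^-1 * \sum_i \sum_j `|c2 i j - c1 i j|.
  rewrite pair_bigA mulr_sumr; apply: eq_bigr => -[i j] _ /=.
  by rewrite -mulrBl normrM [`|_^-1|]ger0_norm ?invr_ge0 // mulrC.
rewrite (natrX _ N 2) natrM !invfM le_eqVlt; apply/orP; left; apply/eqP; ring.
Qed.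

Lemma pN_const_lipschitz (R : realType) (q N : nat) (beta c1 c2 : R) :
  (0 < q)%N -> 0 <= beta -> 0 <= c1 -> 0 <= c2 ->
  `|pN q beta (const_mx c2 : 'M[R]_N) - pN q beta (const_mx c1 : 'M[R]_N)| <=
  2^-1 * beta * `|c2 - c1|.
Proof.
move=> q_gt0 beta_ge0 c1_ge0 c2_ge0.
have const_ge0 (c : R) : 0 <= c -> forall i j, 0 <= (const_mx c : 'M[R]_N) i j.
  by move=> c_ge0 i j; rewrite mxE.
apply: le_trans
  (pN_lipschitz q_gt0 beta_ge0 (const_ge0 _ c1_ge0) (const_ge0 _ c2_ge0)) _.
have [-> | N_gt0] := posnP N.
  by rewrite big_ord0 mulr0 !mulr_ge0 ?invr_ge0.
under eq_bigr do under eq_bigr do rewrite !mxE.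
rewrite !sumr_const card_ord -mulrnA -[`|c2 - c1| *+ _]mulr_natr natrM.
have N_neq0 : N%:R != 0 :> R by rewrite pnatr_eq0 -lt0n.
rewrite le_eqVlt; apply/orP; left; apply/eqP.
by field; rewrite N_neq0.
Qed.

Theorem mainTheorem5 (R : realType) (q N : nat) (beta : R) :
  (2 <= q)%N -> 0 <= beta ->
  (forall c1 c2 : 'M[R]_N,
     (forall i j, 0 <= c1 i j) -> (forall i j, 0 <= c2 i j) ->
     `|pN q beta c2 - pN q beta c1|
       <= beta / (2 * (N ^ 2)%:R) * \sum_(i < N) \sum_(j < N) `|c2 i j - c1 i j|)
  /\
  (forall c1 c2 : R, 0 <= c1 -> 0 <= c2 ->
     `|pN q beta (const_mx c2 : 'M[R]_N) - pN q beta (const_mx c1 : 'M[R]_N)|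
       <= 2^-1 * beta * `|c2 - c1|).
Proof.
move=> /ltnW q_gt0 beta_ge0; split => c1 c2.
  exact: pN_lipschitz.
exact: pN_const_lipschitz.
Qed.
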